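(* Let $(X,m)$, $X=\{x_1,\ldots,x_n\}\subset\mathbb{R}^N$, be a configuration of particles with nonzero masses, exponent $a\neq0$ and nonzero total mass $\mu_0$. Then $(X,m)$ is a central configuration if and only if there exists $\lambda\in\mathbb{R}$ such that, with $S_{ij}=s_{ij}^a-\lambda/\mu_0$ for $i\neq j$ and $S_{jj}=-\frac{1}{m_j}\sum_{i\neq j}m_iS_{ij}$, \[\sum_{i=1}^n\sum_{k=1}^n m_im_kS_{ij}S_{kl}s_{ik}=0\quad\text{for all } j,l=1,\ldots,n.\]
   Context: $s_{ij}=\overrightarrow{x_ix_j}^2$ (so $s_{ii}=0$). Accelerations are $\overrightarrow{\gamma}_j=-\sum_{i\neq j}m_is_{ij}^a\overrightarrow{x_ix_j}$, and $(X,m)$ is central if there exist a vector $\overrightarrow{\gamma}_O$, a point $x_O$ and a real $\lambda$ with $\overrightarrow{\gamma}_j-\overrightarrow{\gamma}_O=\lambda\overrightarrow{x_Ox_j}$ for all $j$. *)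

From HB Require Import structures.
From mathcomp Require Import all_boot all_order all_algebra.
From mathcomp Require Import reals exp.
Set Implicit Arguments. Unset Strict Implicit. Unset Printing Implicit Defensive.
Import Order.TTheory GRing.Theory Num.Theory.
Local Open Scope ring_scope.

Definition sqdist (R : realType) (N n : nat) (x : 'I_n -> 'rV[R]_N) (i j : 'I_n) : R :=
  \sum_(k < N) (x j 0 k - x i 0 k) ^+ 2.

Definition accel (R : realType) (N n : nat) (a : R) (x : 'I_n -> 'rV[R]_N)
  (m : 'I_n -> R) (j : 'I_n) : 'rV[R]_N :=
  - \sum_(i < n | i != j) (m i * (sqdist x i j `^ a)) *: (x j - x i).

Definition central (R : realType) (N n : nat) (a : R) (x : 'I_n -> 'rV[R]_N)
  (m : 'I_n -> R) : Prop :=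
  exists (gO xO : 'rV[R]_N) (lam : R),
    forall j : 'I_n, accel a x m j - gO = lam *: (x j - xO).

Definition Smat (R : realType) (N n : nat) (a lam : R) (x : 'I_n -> 'rV[R]_N)
  (m : 'I_n -> R) (i j : 'I_n) : R :=
  let mu0 := \sum_(k < n) m k in
  let S0 := fun p q : 'I_n => sqdist x p q `^ a - lam / mu0 in
  if i == j then - (m j)^-1 * \sum_(p < n | p != j) m p * S0 p j
  else S0 i j.

(** Write [w_j = sum_i m_i S_ij x_i] ([Scomb] below).  The diagonal of [S] is chosen so that every
    column of [diag(m) S] sums to zero, and for such weights the double sum
    [sum_(i,k) al_i be_k |x_i - x_k|^2] collapses to [-2 <sum al_i x_i, sum be_k x_k>];
    hence the condition of the theorem says that the Gram matrix of the [w_j]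
    vanishes, i.e. that every [w_j] is zero.  Expanding [S] gives
    [w_j = gamma_j + lam (x_j - c)] with [c] the centre of mass, and since the rows
    of [diag(m) S diag(m)] also sum to zero, [sum_j m_j w_j = 0]; so all [w_j]
    vanish exactly when the [gamma_j] are an affine image [-lam (x_j - c)] of the
    positions, which is centrality. *)

From HB Require Import structures.
From mathcomp Require Import all_boot all_order all_algebra.
From mathcomp Require Import reals exp.
From mathcomp Require Import ring.
Import Order.TTheory GRing.Theory Num.Theory.
Local Open Scope ring_scope.

Lemma sum_weighted_sqr_diff {R : comPzRingType} {I : finType} (al be y : I -> R) :
    \sum_i al i = 0 -> \sum_i be i = 0 ->
  \sum_i \sum_k al i * be k * (y k - y i) ^+ 2 =
  - 2 * ((\sum_i al i * y i) * (\sum_k be k * y k)).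
Proof.
move=> al0 be0.
have expand i : \sum_k al i * be k * (y k - y i) ^+ 2 =
    al i * \sum_k be k * y k ^+ 2 + al i * y i ^+ 2 * \sum_k be k
    - 2 * (al i * y i * \sum_k be k * y k).
  rewrite !mulr_sumr -big_split -sumrB /=.
  by apply: eq_bigr => k _; ring.
rewrite (eq_bigr _ (fun i _ => expand i)) be0.
under eq_bigr do rewrite mulr0 addr0.
by rewrite sumrB -!mulr_suml al0 mul0r sub0r -mulr_sumr -mulr_suml mulNr.
Qed.

Lemma row_sum_sqr_eq0 {R : realDomainType} {N : nat} (v : 'rV[R]_N) :
  \sum_c v 0 c * v 0 c = 0 -> v = 0.
Proof.
move=> /psumr_eq0P v0; apply/rowP => c; rewrite mxE.
have /eqP : v 0 c * v 0 c = 0 by apply: v0 => // k _; rewrite -expr2 sqr_ge0.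
by rewrite mulf_eq0 orbb => /eqP.
Qed.

Lemma sqdistC {R : realType} {N n : nat} (x : 'I_n -> 'rV[R]_N) (i j : 'I_n) :
  sqdist x i j = sqdist x j i.
Proof. by apply: eq_bigr => k _; rewrite -sqrrN opprB. Qed.

Definition barycenter {R : fieldType} {N n : nat} (x : 'I_n -> 'rV[R]_N)
    (m : 'I_n -> R) : 'rV[R]_N :=
  (\sum_i m i)^-1 *: \sum_i m i *: x i.

Lemma sum_mass_sub_barycenter {R : fieldType} {N n : nat} (x : 'I_n -> 'rV[R]_N)
    (m : 'I_n -> R) (y : 'rV[R]_N) :
  \sum_i m i != 0 ->
  \sum_i m i *: (x i - y) = (\sum_i m i) *: (barycenter x m - y).
Proof.
move=> mu0; rewrite scalerBr scalerA mulfV // scale1r scaler_suml -sumrB.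
by apply: eq_bigr => i _; rewrite scalerBr.
Qed.

Section WeightedColumns.
Context {R : realType} {N n : nat} {a lam : R}.
Context {x : 'I_n -> 'rV[R]_N} {m : 'I_n -> R}.
Hypothesis m_neq0 : forall i, m i != 0.

Local Notation S := (Smat a lam x m).
Local Notation S0 i j := (sqdist x i j `^ a - lam / \sum_(k < n) m k).

Lemma Smat_diag j : S j j = - (m j)^-1 * \sum_(i < n | i != j) m i * S0 i j.
Proof. by rewrite /Smat eqxx. Qed.

Lemma Smat_offdiag i j : i != j -> S i j = S0 i j.
Proof. by move=> /negbTE ij; rewrite /Smat ij. Qed.

Lemma Smat_diag_weighted j :
  m j * S j j = - \sum_(i < n | i != j) m i * S i j.
Proof.
rewrite Smat_diag mulrA mulrN mulfV // mulN1r; congr (- _).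
by apply: eq_bigr => i ij; rewrite Smat_offdiag.
Qed.

Lemma sum_Smat_col j : \sum_i m i * S i j = 0.
Proof. by rewrite (bigD1 j) //= Smat_diag_weighted addNr. Qed.

Lemma sum_Smat_row i : \sum_j m j * S i j = 0.
Proof.
rewrite (bigD1 i) //= Smat_diag_weighted.
rewrite [X in _ + X](eq_bigr (fun j => m j * S j i)) ?addNr // => j ji.
have ij : i != j by rewrite eq_sym.
by rewrite !Smat_offdiag // sqdistC.
Qed.

Definition Scomb j : 'rV[R]_N := \sum_i (m i * S i j) *: x i.

Lemma Scomb_coord j c : Scomb j 0 c = \sum_i m i * S i j * x i 0 c.
Proof. by rewrite summxE; apply: eq_bigr => i _; rewrite mxE. Qed.

Lemma Smat_quadE j l :
  \sum_(i < n) \sum_(k < n) m i * m k * S i j * S k l * sqdist x i k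
  = - 2 * \sum_(c < N) Scomb j 0 c * Scomb l 0 c.
Proof.
under eq_bigr do under eq_bigr do rewrite /sqdist mulr_sumr.
under eq_bigr do rewrite exchange_big /=.
rewrite exchange_big /= mulr_sumr; apply: eq_bigr => c _.
rewrite !Scomb_coord -(sum_weighted_sqr_diff (fun i => m i * S i j)
  (fun k => m k * S k l) (fun i => x i 0 c)) ?sum_Smat_col //.
by apply: eq_bigr => i _; apply: eq_bigr => k _; ring.
Qed.

Lemma sum_mass_Scomb : \sum_j m j *: Scomb j = 0.
Proof.
under eq_bigr do rewrite scaler_sumr.
rewrite exchange_big /= big1 // => i _.
under eq_bigr do rewrite scalerA mulrCA.
by rewrite -scaler_suml -mulr_sumr sum_Smat_row mulr0 scale0r.
Qed.

Lemma Scomb_centered j : Scomb j = \sum_(i < n | i != j) (m i * S0 i j) *: (x i - x j).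
Proof.
have -> : Scomb j = \sum_i (m i * S i j) *: (x i - x j).
  under [RHS]eq_bigr do rewrite scalerBr.
  by rewrite sumrB -scaler_suml sum_Smat_col scale0r subr0.
rewrite (bigD1 j) //= subrr scaler0 add0r.
by apply: eq_bigr => i ij; rewrite Smat_offdiag.
Qed.

Lemma ScombE j : \sum_i m i != 0 ->
  Scomb j = accel a x m j + lam *: (x j - barycenter x m).
Proof.
move=> mu0; rewrite Scomb_centered.
under eq_bigr do rewrite mulrBr scalerBl.
rewrite sumrB /accel; congr (_ + _).
  by rewrite -sumrN; apply: eq_bigr => i _; rewrite -scalerN opprB.
rewrite (eq_bigr (fun i => (lam / \sum_k m k) *: (m i *: (x i - x j)))); last first.
  by move=> i _; rewrite scalerA mulrC.
rewrite -scaler_sumr.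
have -> : \sum_(i < n | i != j) m i *: (x i - x j) = \sum_i m i *: (x i - x j).
  by rewrite [RHS](bigD1 j) //= subrr scaler0 add0r.
rewrite sum_mass_sub_barycenter // scalerA mulfVK //.
by rewrite -scalerN opprB.
Qed.

End WeightedColumns.

Arguments Scomb {R N n} a lam x m j.

Section Centrality.
Context {R : realType} {N n : nat} {a : R}.
Context {x : 'I_n -> 'rV[R]_N} {m : 'I_n -> R}.
Hypotheses (m_neq0 : forall i, m i != 0) (mu0 : \sum_i m i != 0).

Lemma Scomb_eq0_central lam : (forall j, Scomb a lam x m j = 0) -> central a x m.
Proof.
move=> w0; exists 0, (barycenter x m), (- lam) => j.
have /eqP := w0 j; rewrite ScombE // addr_eq0 => /eqP ->.
by rewrite subr0 scaleNr.
Qed.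

Lemma central_Scomb_eq0 : central a x m -> exists lam, forall j, Scomb a lam x m j = 0.
Proof.
move=> [gO [xO [lp gamma]]]; exists (- lp).
set v := gO + lp *: (barycenter x m - xO).
have w_const j : Scomb a (- lp) x m j = v.
  rewrite ScombE // -[accel _ _ _ _](subrK gO) gamma /v.
  by apply/rowP => c; rewrite !mxE; ring.
have : \sum_j m j *: v = 0.
  rewrite -[RHS](sum_mass_Scomb (a := a) (lam := - lp) (x := x) m_neq0).
  by apply: eq_bigr => j _; rewrite w_const.
rewrite -scaler_suml => /eqP; rewrite scaler_eq0 (negbTE mu0) /= => /eqP v0 j.
by rewrite w_const.
Qed.

End Centrality.

Theorem corollaryB1 (R : realType) (N n : nat) (a : R)
    (x : 'I_n -> 'rV[R]_N) (m : 'I_n -> R)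
    (hx : injective x)
    (hm : forall i, m i != 0)
    (ha : a != 0)
    (hmu : \sum_(i < n) m i != 0) :
  central a x m <->
  exists lam : R, forall j l : 'I_n,
    \sum_(i < n) \sum_(k < n)
      m i * m k * Smat a lam x m i j * Smat a lam x m k l * sqdist x i k = 0.
Proof.
split.
  move=> /(central_Scomb_eq0 hm hmu) [lam w0]; exists lam => j l.
  by rewrite (Smat_quadE hm) w0 big1 ?mulr0 // => c _; rewrite mxE mul0r.
move=> [lam quad0]; apply: (Scomb_eq0_central hm hmu lam) => j.
apply: row_sum_sqr_eq0; have /eqP := quad0 j j.
by rewrite (Smat_quadE hm) mulf_eq0 oppr_eq0 pnatr_eq0 => /eqP.
Qed.
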